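(* In the setting of the context, the subalgebra of invariants $M_1^B=\{x\in M_1: b\triangleright x=\varepsilon(b)x \text{ for all } b\in B\}$ equals $M$.
   Context: $k$ is a field; $C_R(S)=\{r\in R:rs=sr\ \forall s\in S\}$. $N\subseteq M$ is a strongly separable, irreducible extension of $k$-algebras: $C_M(N)=k1$ and there are an $N$-bimodule map $E:M\to N$ and $x_1,\dots,x_n,y_1,\dots,y_n\in M$ with $\sum_iE(mx_i)y_i=m=\sum_ix_iE(y_im)$ for all $m\in M$, $E(1)\neq0$, $\sum_ix_iy_i\neq0$; normalized so that $E(1)=1$, whence $\sum_ix_iy_i=\lambda^{-1}1$ with $0\neq\lambda\in k$. Basic construction: given $S\subseteq R$, an $S$-bimodule map $E_S:R\to S$ with $E_S(1)=1$ and $r_i,s_i\in R$ with $\sum_iE_S(rr_i)s_i=r=\sum_ir_iE_S(s_ir)$ and $\sum_ir_is_i=\lambda^{-1}1$, set $R_1=R\otimes_SR$ with product $(a\otimes b)(c\otimes d)=aE_S(bc)\otimes d$, unit $\sum_ir_i\otimes s_i$, $R\subseteq R_1$ via $r\mapsto\sum_irr_i\otimes s_i$, Jones idempotent $e=1\otimes1$, $E_R:R_1\to R$, $a\otimes b\mapsto\lambda ab$; then $E_R$, $\lambda^{-1}r_i\otimes1$, $1\otimes s_i$ satisfy the same conditions with the same $\lambda$. From $(N\subseteq M,E)$ get $M_1,e_1,E_M$; from $(M\subseteq M_1,E_M)$ get $M_2,e_2,E_{M_1}$. Let $A=C_{M_1}(N)$, $B=C_{M_2}(M)$, $C=C_{M_2}(N)$.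 Depth 2 is assumed: $M_1$ is free as right $M$-module with basis in $A$, $M_2$ free as right $M_1$-module with basis in $B$. Let $F=E_M\circ E_{M_1}$, with values on $C$ in $k1\cong k$. The counit of $B$ is $\varepsilon(b)=\lambda^{-2}F(e_2e_1b)$, and $B$ acts on $M_1$ by $b\triangleright x=\lambda^{-1}E_{M_1}(bxe_2)$. *)

From HB Require Import structures.
From mathcomp Require Import all_boot all_order all_algebra.
Set Implicit Arguments. Unset Strict Implicit. Unset Printing Implicit Defensive.
Import GRing.Theory.
Local Open Scope ring_scope.

Definition centralizes (R : nzRingType) (P : R -> Prop) (r : R) : Prop :=
  forall s, P s -> r * s = s * r.

Definition is_subalgebra (k : fieldType) (R : algType k) (P : R -> Prop) : Prop :=
  [/\ P 1,
      forall a b, P a -> P b -> P (a + b),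
      forall a, P a -> P (- a),
      forall a b, P a -> P b -> P (a * b)
    & forall (c : k) a, P a -> P (c *: a)].

(* (R1, tens) is the tensor product R (x)_S R of k-vector spaces balanced over S:
   tens is k-bilinear and S-balanced, its image spans R1, and every k-bilinear
   S-balanced map into a k-vector space factors linearly through tens. *)
Definition is_tensor_over (k : fieldType) (R : algType k) (S : R -> Prop)
    (R1 : lmodType k) (tens : R -> R -> R1) : Prop :=
  (forall a a' b, tens (a + a') b = tens a b + tens a' b) /\
  (forall a b b', tens a (b + b') = tens a b + tens a b') /\
  (forall (c : k) a b, tens (c *: a) b = c *: tens a b) /\
  (forall (c : k) a b, tens a (c *: b) = c *: tens a b) /\
  (forall a s b, S s -> tens (a * s) b = tens a (s * b)) /\
  (forall t : R1, exists m (u v : 'I_m -> R), t = \sum_(j < m) tens (u j) (v j)) /\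
  (forall (V : lmodType k) (f : R -> R -> V),
         (forall a a' b, f (a + a') b = f a b + f a' b) ->
         (forall a b b', f a (b + b') = f a b + f a b') ->
         (forall (c : k) a b, f (c *: a) b = c *: f a b) ->
         (forall (c : k) a b, f a (c *: b) = c *: f a b) ->
         (forall a s b, S s -> f (a * s) b = f a (s * b)) ->
         exists g : R1 -> V,
           [/\ forall t t', g (t + t') = g t + g t',
               forall (c : k) t, g (c *: t) = c *: g t
             & forall a b, g (tens a b) = f a b]).

Definition bc_inc (k : fieldType) (R : algType k) (R1 : algType k)
    (tens : R -> R -> R1) (n : nat) (r s : 'I_n -> R) (a : R) : R1 :=
  \sum_(i < n) tens (a * r i) (s i).

Definition bc_jones (k : fieldType) (R : algType k) (R1 : algType k)
    (tens : R -> R -> R1) : R1 := tens 1 1.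

Definition is_basic_construction (k : fieldType) (R : algType k) (S : R -> Prop)
    (ES : R -> R) (n : nat) (r s : 'I_n -> R) (lam : k)
    (R1 : algType k) (tens : R -> R -> R1) (ER : R1 -> R) : Prop :=
  is_tensor_over S tens /\
  (forall a b c d, tens a b * tens c d = tens (a * ES (b * c)) d) /\
  (1 = \sum_(i < n) tens (r i) (s i) :> R1) /\
  (forall t t', ER (t + t') = ER t + ER t') /\
  (forall (c : k) t, ER (c *: t) = c *: ER t) /\
  (forall a b, ER (tens a b) = lam *: (a * b)).

(* R1 is free as a right R-module (via inc : R -> R1) with a basis contained in P.
   (R1 is finitely generated over R in our setting, so every basis is finite.) *)
Definition right_free_with_basis_in (k : fieldType) (R R1 : algType k)
    (inc : R -> R1) (P : R1 -> Prop) : Prop :=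
  exists (p : nat) (u : 'I_p -> R1),
    [/\ forall j, P (u j),
        forall t : R1, exists m : 'I_p -> R, t = \sum_(j < p) u j * inc (m j)
      & forall m : 'I_p -> R, \sum_(j < p) u j * inc (m j) = 0 -> forall j, m j = 0].

From HB Require Import structures.
From mathcomp Require Import all_boot all_order all_algebra.
From mathcomp Require Import ring.
Import GRing.Theory.
Local Open Scope ring_scope.
Set Implicit Arguments. Unset Strict Implicit.

(* An element u of M1 fixed by B lies in M: e2 belongs to B, acts by
   e2 |> u = E_M(u), and has counit 1.  Conversely, for m in M and b in B the
   element z = E_{M1}(b e2) commutes with M, since b does and e2 commutes with
   M.  Irreducibility lifts from N <= M to M <= M1 (write z e1 = w (x) 1 and
   check that w centralizes N), so z = c1 with c in k.  Then b |> m = lam^-1 c m,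
   and F(e2 e1 b) = E_M(e1 z) = c lam shows that eps(b) m is the same. *)


Lemma big_additive (V W : zmodType) (f : V -> W)
    (fD : forall a b, f (a + b) = f a + f b)
    (I : Type) (rI : seq I) (P : pred I) (F : I -> V) :
  f (\sum_(i <- rI | P i) F i) = \sum_(i <- rI | P i) f (F i).
Proof.
have f0 : f 0 = 0 by apply: (addrI (f 0)); rewrite -fD !addr0.
exact: (big_morph f fD f0).
Qed.

Definition is_quasi_basis (k : fieldType) (R : algType k) (S : R -> Prop)
    (ES : R -> R) (n : nat) (r s : 'I_n -> R) : Prop :=
  [/\ forall a, S (ES a),
      forall a, \sum_(i < n) ES (a * r i) * s i = a
    & forall a, \sum_(i < n) r i * ES (s i * a) = a].

Section BasicConstruction.

Variables (k : fieldType) (R : algType k) (S : R -> Prop) (ES : R -> R)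
  (n : nat) (r s : 'I_n -> R) (lam : k)
  (R1 : algType k) (tens : R -> R -> R1) (ER : R1 -> R).
Hypothesis HB : is_basic_construction S ES r s lam tens ER.
Hypothesis HQ : is_quasi_basis S ES r s.

Local Notation inc := (bc_inc tens r s).
Local Notation e := (bc_jones tens).
Local Notation inc_range := (fun u : R1 => exists a, u = inc a).

Lemma tensDl a a' b : tens (a + a') b = tens a b + tens a' b.
Proof. by case: HB => [[H _]] _. Qed.
Lemma tensDr a b b' : tens a (b + b') = tens a b + tens a b'.
Proof. by case: HB => [[_ [H _]]] _. Qed.
Lemma tensZl c a b : tens (c *: a) b = c *: tens a b.
Proof. by case: HB => [[_ [_ [H _]]]] _. Qed.
Lemma tens_balanced a m b : S m -> tens (a * m) b = tens a (m * b).
Proof. by case: HB => [[_ [_ [_ [_ [H _]]]]]] _; apply: H. Qed.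
Lemma tens_span t : exists m (u v : 'I_m -> R), t = \sum_(j < m) tens (u j) (v j).
Proof. by case: HB => [[_ [_ [_ [_ [_ [H _]]]]]]] _. Qed.
Lemma tens_mul a b c d : tens a b * tens c d = tens (a * ES (b * c)) d.
Proof. by case: HB => _ [H _]. Qed.
Lemma bc_one : 1 = \sum_(i < n) tens (r i) (s i) :> R1.
Proof. by case: HB => _ [_ [H _]]. Qed.
Lemma ERD t t' : ER (t + t') = ER t + ER t'.
Proof. by case: HB => _ [_ [_ [H _]]]. Qed.
Lemma ERZ c t : ER (c *: t) = c *: ER t.
Proof. by case: HB => _ [_ [_ [_ [H _]]]]. Qed.
Lemma ER_tens a b : ER (tens a b) = lam *: (a * b).
Proof. by case: HB => _ [_ [_ [_ [_ H]]]]. Qed.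

Lemma ES_mem a : S (ES a).
Proof. by case: HQ. Qed.
Lemma quasi_basis_l a : \sum_(i < n) ES (a * r i) * s i = a.
Proof. by case: HQ. Qed.
Lemma quasi_basis_r a : \sum_(i < n) r i * ES (s i * a) = a.
Proof. by case: HQ. Qed.

Lemma tens_suml I (rI : seq I) (P : pred I) F b :
  tens (\sum_(i <- rI | P i) F i) b = \sum_(i <- rI | P i) tens (F i) b.
Proof. by rewrite (big_additive (f := tens^~ b)) // => a a'; apply: tensDl. Qed.
Lemma tens_sumr I (rI : seq I) (P : pred I) F a :
  tens a (\sum_(i <- rI | P i) F i) = \sum_(i <- rI | P i) tens a (F i).
Proof. by rewrite (big_additive (f := tens a)) // => b b'; apply: tensDr. Qed.

Lemma tens_ext (V : zmodType) (f g : R1 -> V) :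
    (forall t t', f (t + t') = f t + f t') ->
    (forall t t', g (t + t') = g t + g t') ->
    (forall a b, f (tens a b) = g (tens a b)) -> f =1 g.
Proof.
move=> fD gD fg t; have [m [u [v ->]]] := tens_span t.
by rewrite !big_additive //; apply: eq_bigr.
Qed.

Lemma tens_bal1 m b : S m -> tens m b = tens 1 (m * b).
Proof. by move=> Sm; rewrite -{1}[m]mul1r tens_balanced. Qed.

Lemma mul_inc_tens a c d : inc a * tens c d = tens (a * c) d.
Proof.
rewrite /bc_inc mulr_suml.
under eq_bigr => i _ do rewrite tens_mul -mulrA.
by rewrite -tens_suml -mulr_sumr quasi_basis_r.
Qed.

Lemma mul_tens_inc a b m : tens a b * inc m = tens a (b * m).
Proof.
rewrite /bc_inc mulr_sumr.
under eq_bigr => i _ do rewrite tens_mul (tens_balanced _ _ (ES_mem _)) mulrA.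
by rewrite -tens_sumr quasi_basis_l.
Qed.

Lemma bc_incD a b : inc (a + b) = inc a + inc b.
Proof. by rewrite /bc_inc -big_split; apply: eq_bigr => i _; rewrite mulrDl tensDl. Qed.

Lemma bc_incZ c a : inc (c *: a) = c *: inc a.
Proof. by rewrite /bc_inc scaler_sumr; apply: eq_bigr => i _; rewrite -scalerAl tensZl. Qed.

Lemma bc_inc1 : inc 1 = 1.
Proof. by rewrite /bc_inc bc_one; apply: eq_bigr => i _; rewrite mul1r. Qed.

Lemma jones_mul_inc a : e * inc a = tens 1 a.
Proof. by rewrite /bc_jones mul_tens_inc mul1r. Qed.

Lemma inc_mul_jones a : inc a * e = tens a 1.
Proof. by rewrite /bc_jones mul_inc_tens mulr1. Qed.

Lemma jones_commute m : S m -> e * inc m = inc m * e.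
Proof. by move=> Sm; rewrite jones_mul_inc inc_mul_jones (tens_bal1 _ Sm) mulr1. Qed.

Lemma tens_inc_jones a b : tens a b = inc a * e * inc b.
Proof. by rewrite -mulrA jones_mul_inc mul_inc_tens mulr1. Qed.

Lemma ER_jones : ER e = lam *: 1.
Proof. by rewrite ER_tens mulr1. Qed.

Lemma ER_jones_sandwich a : ER (e * inc a * e) = lam *: ES a.
Proof. by rewrite jones_mul_inc tens_mul !mul1r mulr1 ER_tens mulr1. Qed.

Lemma ER_incl a t : ER (inc a * t) = a * ER t.
Proof.
apply: (tens_ext (f := fun t => ER (inc a * t)) (g := fun t => a * ER t)) => [t1 t2|t1 t2|b c].
- by rewrite mulrDr ERD.
- by rewrite ERD mulrDr.
- by rewrite mul_inc_tens !ER_tens -scalerAr mulrA.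
Qed.

Lemma ER_incr a t : ER (t * inc a) = ER t * a.
Proof.
apply: (tens_ext (f := fun t => ER (t * inc a)) (g := fun t => ER t * a)) => [t1 t2|t1 t2|b c].
- by rewrite mulrDl ERD.
- by rewrite ERD mulrDl.
- by rewrite mul_tens_inc !ER_tens -scalerAl mulrA.
Qed.

Lemma ER1 : lam != 0 -> \sum_(i < n) r i * s i = lam^-1 *: 1 -> ER 1 = 1.
Proof.
move=> lam0 rs; rewrite bc_one big_additive; last exact: ERD.
under eq_bigr => i _ do rewrite ER_tens.
by rewrite -scaler_sumr rs scalerA mulfV // scale1r.
Qed.

Lemma bc_quasi_basis : lam != 0 ->
  is_quasi_basis inc_range (fun u => inc (ER u))
    (fun i => lam^-1 *: tens (r i) 1) (fun i => tens 1 (s i)).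
Proof.
move=> lam0; split=> [u|u|u]; first by exists (ER u).
- apply: (tens_ext (g := id)
    (f := fun u => \sum_(i < n) inc (ER (u * (lam^-1 *: tens (r i) 1))) * tens 1 (s i)))
    => // [t t'|a b /=].
    by rewrite -big_split; apply: eq_bigr => i _; rewrite mulrDl ERD bc_incD mulrDl.
  under eq_bigr => i _ do rewrite -scalerAr tens_mul ERZ ER_tens scalerA mulVf // scale1r
    mulr1 mul_inc_tens mulr1 (tens_balanced _ _ (ES_mem _)).
  by rewrite -tens_sumr quasi_basis_l.
- apply: (tens_ext (g := id)
    (f := fun u => \sum_(i < n) (lam^-1 *: tens (r i) 1) * inc (ER (tens 1 (s i) * u))))
    => // [t t'|a b /=].
    by rewrite -big_split; apply: eq_bigr => i _; rewrite mulrDr ERD bc_incD mulrDr.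
  under eq_bigr => i _ do rewrite tens_mul ER_tens bc_incZ -scalerAl -scalerAr scalerA mulVf //
    scale1r mul_tens_inc !mul1r -(tens_balanced _ _ (ES_mem _)).
  by rewrite -tens_suml quasi_basis_r.
Qed.

Lemma bc_centralizer_scalar : lam != 0 ->
    (forall m, centralizes S m -> exists c : k, m = c *: 1) ->
  forall z, centralizes inc_range z -> exists c : k, z = c *: 1.
Proof.
move=> lam0 irr z zC.
have zinc a : z * inc a = inc a * z by apply: zC; exists a.
have [w zeE] : exists w, z * e = tens w 1.
  have [m [u [v ->]]] := tens_span z.
  rewrite mulr_suml; under eq_bigr => j _ do rewrite tens_mul.
  by rewrite -tens_suml; eexists.
have [c wE] : exists c : k, w = c *: 1.
  apply: irr => m Sm.
  have : z * e * inc m = inc m * (z * e).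
    by rewrite -mulrA jones_commute // mulrA zinc mulrA.
  rewrite zeE mul_tens_inc mul_inc_tens mul1r -(mulr1 m) -tens_balanced //.
  by move=> /(congr1 ER); rewrite !ER_tens !mulr1 => /(scalerI lam0).
exists c; rewrite -[z]mulr1 bc_one mulr_sumr scaler_sumr; apply: eq_bigr => i _.
rewrite tens_inc_jones !mulrA zinc -(mulrA _ z) zeE wE tensZl.
by rewrite -scalerAr -scalerAl.
Qed.

End BasicConstruction.

Section Tower.

Variables (k : fieldType) (R : algType k) (S : R -> Prop) (ES : R -> R)
  (n : nat) (r s : 'I_n -> R) (lam : k)
  (R1 : algType k) (t1 : R -> R -> R1) (E1 : R1 -> R)
  (R2 : algType k) (t2 : R1 -> R1 -> R2) (E2 : R2 -> R1).

Local Notation inc1 := (bc_inc t1 r s).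
Local Notation r2 := (fun i => lam^-1 *: t1 (r i) 1).
Local Notation s2 := (fun i => t1 1 (s i)).
Local Notation inc2 := (bc_inc t2 r2 s2).
Local Notation e1 := (bc_jones t1).
Local Notation e2 := (bc_jones t2).
Local Notation inB := (centralizes (fun w : R2 => exists m, w = inc2 (inc1 m))).
Local Notation act b u := (lam^-1 *: E2 (b * inc2 u * e2)).
Local Notation eps_mul b u := (lam^-2 *: (inc1 (E1 (E2 (e2 * inc2 e1 * b))) * u)).

Hypothesis HB1 : is_basic_construction S ES r s lam t1 E1.
Hypothesis HQ1 : is_quasi_basis S ES r s.
Hypothesis lam0 : lam != 0.
Hypothesis sum_rs : \sum_(i < n) r i * s i = lam^-1 *: 1.
Hypothesis irr : forall m, centralizes S m -> exists c : k, m = c *: 1.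
Hypothesis HB2 : is_basic_construction (fun u => exists m, u = inc1 m)
  (fun u => inc1 (E1 u)) r2 s2 lam t2 E2.

Let HQ2 := bc_quasi_basis HB1 HQ1 lam0.

Lemma jones2_in_B : inB e2.
Proof. by move=> _ [m ->]; apply: (jones_commute HB2 HQ2); exists m. Qed.

Lemma act_jones2 u : act e2 u = inc1 (E1 u).
Proof. by rewrite (ER_jones_sandwich HB2 HQ2) scalerA mulVf // scale1r. Qed.

Lemma counit_jones2 u : eps_mul e2 u = u.
Proof.
rewrite (ER_jones_sandwich HB2 HQ2) (ERZ HB1) (ER_jones HB1).
rewrite !(bc_incZ HB1) !(bc_inc1 HB1) (ERZ HB1) (ER1 HB1 lam0 sum_rs) (bc_incZ HB1) (bc_inc1 HB1).
by rewrite -!scalerAl mul1r !scalerA -expr2 mulVf ?expf_neq0 // scale1r.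
Qed.

Lemma F_jones2_swap t b : E1 (E2 (e2 * inc2 t * b)) = E1 (t * E2 (b * e2)).
Proof.
move: b; apply: (tens_ext HB2) => [w w'|w w'|p q].
- by rewrite mulrDr (ERD HB2) (ERD HB1).
- by rewrite mulrDl (ERD HB2) mulrDr (ERD HB1).
- rewrite (jones_mul_inc HB2 HQ2) /bc_jones !(tens_mul HB2) !(ER_tens HB2) mul1r !mulr1.
  by rewrite -scalerAr !(ERZ HB1) (ER_incl HB1 HQ1) mulrA (ER_incr HB1 HQ1).
Qed.

Lemma E2_mul_jones2_scalar b : inB b -> exists c : k, E2 (b * e2) = c *: 1.
Proof.
move=> Bb; apply: (bc_centralizer_scalar HB1 HQ1 lam0 irr) => _ [a ->].
have inc2a : exists m, inc2 (inc1 a) = inc2 (inc1 m) by exists a.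
rewrite -(ER_incr HB2 HQ2) -mulrA (jones2_in_B inc2a) mulrA (Bb _ inc2a).
by rewrite -mulrA (ER_incl HB2 HQ2).
Qed.

Lemma inc1_invariant b m : inB b -> act b (inc1 m) = eps_mul b (inc1 m).
Proof.
move=> Bb; have [c bc] := E2_mul_jones2_scalar Bb.
have inc2m : exists m', inc2 (inc1 m) = inc2 (inc1 m') by exists m.
rewrite (Bb _ inc2m) -mulrA (ER_incl HB2 HQ2) F_jones2_swap bc.
rewrite -!scalerAr !mulr1 (ERZ HB1) (ER_jones HB1) !(bc_incZ HB1) (bc_inc1 HB1).
by rewrite -!scalerAl mul1r !scalerA; congr (_ *: _); field.
Qed.

End Tower.

Unset Implicit Arguments. Set Strict Implicit.

Theorem proposition5p2
  (k : fieldType) (M : algType k) (N : M -> Prop) (E : M -> M)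
  (n : nat) (x y : 'I_n -> M) (lam : k)
  (* N is a k-subalgebra of M *)
  (HN : is_subalgebra N)
  (* E : M -> N is an N-bimodule map, normalized E(1) = 1 *)
  (HEN : forall m, N (E m))
  (HEadd : forall a b, E (a + b) = E a + E b)
  (HEbimod : forall a u v, N u -> N v -> E (u * a * v) = u * E a * v)
  (HE1 : E 1 = 1)
  (* quasi-basis *)
  (Hq1 : forall m, \sum_(i < n) E (m * x i) * y i = m)
  (Hq2 : forall m, \sum_(i < n) x i * E (y i * m) = m)
  (Hlam : lam != 0)
  (Hxy : \sum_(i < n) x i * y i = lam^-1 *: 1)
  (* irreducibility: C_M(N) = k1 *)
  (Hirr : forall m, centralizes N m -> exists c : k, m = c *: 1)
  (* first basic construction  M1 = M (x)_N M *)
  (M1 : algType k) (t1 : M -> M -> M1) (EM : M1 -> M)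
  (HM1 : is_basic_construction N E x y lam t1 EM)
  (* second basic construction  M2 = M1 (x)_M M1, for (M <= M1, E_M) with
     quasi-basis lam^-1 x_i (x) 1, 1 (x) y_i *)
  (M2 : algType k) (t2 : M1 -> M1 -> M2) (EM1 : M2 -> M1)
  (HM2 : is_basic_construction
           (fun u : M1 => exists m : M, u = bc_inc t1 x y m)
           (fun u : M1 => bc_inc t1 x y (EM u))
           (fun i => lam^-1 *: t1 (x i) 1) (fun i => t1 1 (y i)) lam t2 EM1)
  (* depth 2 *)
  (HD1 : right_free_with_basis_in (bc_inc t1 x y)
           (centralizes (fun u : M1 => exists2 m, N m & u = bc_inc t1 x y m)))
  (HD2 : right_free_with_basis_in
           (bc_inc t2 (fun i => lam^-1 *: t1 (x i) 1) (fun i => t1 1 (y i)))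
           (centralizes (fun w : M2 => exists m : M,
              w = bc_inc t2 (fun i => lam^-1 *: t1 (x i) 1) (fun i => t1 1 (y i))
                    (bc_inc t1 x y m)))) :
  let inc1 := bc_inc t1 x y in
  let inc2 := bc_inc t2 (fun i => lam^-1 *: t1 (x i) 1) (fun i => t1 1 (y i)) in
  let e1 := bc_jones t1 in
  let e2 := bc_jones t2 in
  let F := fun w : M2 => EM (EM1 w) in
  (* B = C_{M2}(M) *)
  let inB := centralizes (fun w : M2 => exists m : M, w = inc2 (inc1 m)) in
  (* action  b |> u = lam^-1 E_{M1}(b u e2) *)
  let act := fun (b : M2) (u : M1) => lam^-1 *: EM1 (b * inc2 u * e2) in
  (* eps(b) u, with eps(b) = lam^-2 F(e2 e1 b) in k1 = k *)
  let eps_mul := fun (b : M2) (u : M1) => lam^-2 *: (inc1 (F (e2 * inc2 e1 * b)) * u) in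
  forall u : M1,
    (forall b : M2, inB b -> act b u = eps_mul b u) <-> (exists m : M, u = inc1 m).
Proof.
cbv zeta => u.
have HQ : is_quasi_basis N E x y by split.
split=> [invariant | [m ->] b Bb].
- exists (EM u).
  rewrite -(act_jones2 HM1 HQ Hlam HM2) invariant ?(counit_jones2 HM1 HQ Hlam Hxy HM2) //.
  exact: (jones2_in_B HM1 HQ Hlam HM2).
- exact: (inc1_invariant HM1 HQ Hlam Hirr HM2).
Qed.
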